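(* Let $\mathfrak A$ be a unital C$^*$-algebra with trivial centre and $\rho,\bar\rho$ conjugate endomorphisms of $\mathfrak A$, i.e. there are $R\in(\iota,\bar\rho\rho)$, $\bar R\in(\iota,\rho\bar\rho)$ with $R^*\bar\rho(\bar R)=1$ and $\bar R^*\rho(R)=1$. Then $\lambda=\rho\bar\rho$ is a canonical endomorphism of $\mathfrak A$ with respect to the subalgebra $\rho(\mathfrak A)$.
   Context: $(\rho,\sigma)=\{T\in\mathfrak A:T\rho(a)=\sigma(a)T\ \forall a\in\mathfrak A\}$. For a unital C$^*$-subalgebra $\mathfrak B\subset\mathfrak A$, an endomorphism $\lambda$ of $\mathfrak A$ with $\lambda(\mathfrak A)\subset\mathfrak B$ is canonical with respect to $\mathfrak B$ if there are $T\in(\iota,\lambda)$ (in $\mathfrak A$) and $S\in\mathfrak B$ with $Sb=\lambda(b)S$ for all $b\in\mathfrak B$, such that $S^*\lambda(T)\in\mathbb C\setminus\{0\}$ and $T^*S\in\mathbb C\setminus\{0\}$. *)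

From HB Require Import structures.
From mathcomp Require Import all_boot all_order all_algebra.
From mathcomp Require Import complex.
From mathcomp Require Import Rstruct.
From Stdlib Require Import Rdefinitions.

Set Implicit Arguments.
Unset Strict Implicit.
Unset Printing Implicit Defensive.
Import Order.TTheory GRing.Theory Num.Theory.

Local Open Scope ring_scope.

Definition Cx : Type := complex Rdefinitions.R.
Definition Cmod (z : Cx) : Rdefinitions.R := Normc.normc z.
Definition Cconj (z : Cx) : Cx := conjc z.

Record CStarAlgebra := {
  car :> Type;
  c0 : car; c1 : car;
  cadd : car -> car -> car;
  copp : car -> car;
  cmul : car -> car -> car;
  cscal : Cx -> car -> car;
  cstar : car -> car;
  cnorm : car -> Rdefinitions.R;
  caddA : forall x y z, cadd x (cadd y z) = cadd (cadd x y) z;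
  caddC : forall x y, cadd x y = cadd y x;
  cadd0 : forall x, cadd c0 x = x;
  caddN : forall x, cadd (copp x) x = c0;
  cscalA : forall (a b : Cx) x, cscal a (cscal b x) = cscal (a * b) x;
  cscal1 : forall x, cscal 1 x = x;
  cscalDr : forall (a : Cx) x y, cscal a (cadd x y) = cadd (cscal a x) (cscal a y);
  cscalDl : forall (a b : Cx) x, cscal (a + b) x = cadd (cscal a x) (cscal b x);
  cmulA : forall x y z, cmul x (cmul y z) = cmul (cmul x y) z;
  cmul1l : forall x, cmul c1 x = x;
  cmul1r : forall x, cmul x c1 = x;
  cmulDl : forall x y z, cmul (cadd x y) z = cadd (cmul x z) (cmul y z);
  cmulDr : forall x y z, cmul x (cadd y z) = cadd (cmul x y) (cmul x z);
  cscal_mull : forall (a : Cx) x y, cscal a (cmul x y) = cmul (cscal a x) y;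
  cscal_mulr : forall (a : Cx) x y, cscal a (cmul x y) = cmul x (cscal a y);
  cstarK : forall x, cstar (cstar x) = x;
  cstarD : forall x y, cstar (cadd x y) = cadd (cstar x) (cstar y);
  cstarZ : forall (a : Cx) x, cstar (cscal a x) = cscal (Cconj a) (cstar x);
  cstarM : forall x y, cstar (cmul x y) = cmul (cstar y) (cstar x);
  cnorm_ge0 : forall x, (0 <= cnorm x)%R;
  cnorm_eq0 : forall x, cnorm x = 0%R -> x = c0;
  cnormD : forall x y, (cnorm (cadd x y) <= cnorm x + cnorm y)%R;
  cnormZ : forall (a : Cx) x, cnorm (cscal a x) = (Cmod a * cnorm x)%R;
  cnormM : forall x y, (cnorm (cmul x y) <= cnorm x * cnorm y)%R;
  cnorm_cstar : forall x, cnorm (cmul (cstar x) x) = (cnorm x ^+ 2)%R;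
  ccomplete : forall u : nat -> car,
    (forall e : Rdefinitions.R, (0 < e)%R -> exists N : nat, forall m n : nat,
        leq N m -> leq N n -> (cnorm (cadd (u m) (copp (u n))) < e)%R) ->
    exists l : car, forall e : Rdefinitions.R, (0 < e)%R -> exists N : nat,
        forall n : nat, leq N n -> (cnorm (cadd (u n) (copp l)) < e)%R
}.

Arguments c0 {_}. Arguments c1 {_}.
Arguments cmul {_}. Arguments cadd {_}. Arguments cscal {_}.
Arguments cstar {_}. Arguments copp {_}.

Definition is_endo (A : CStarAlgebra) (f : A -> A) : Prop :=
  [/\ forall x y, f (cadd x y) = cadd (f x) (f y),
      forall (a : Cx) x, f (cscal a x) = cscal a (f x),
      forall x y, f (cmul x y) = cmul (f x) (f y),
      forall x, f (cstar x) = cstar (f x)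
    & f c1 = c1].

Definition trivial_centre (A : CStarAlgebra) : Prop :=
  forall z : A, (forall a : A, cmul z a = cmul a z) ->
    exists c : Cx, z = cscal c c1.

Definition intertwiner (A : CStarAlgebra) (rho sigma : A -> A) (T : A) : Prop :=
  forall a : A, cmul T (rho a) = cmul (sigma a) T.

Definition unital_star_subalgebra (A : CStarAlgebra) (B : A -> Prop) : Prop :=
  [/\ B c1,
      forall x y, B x -> B y -> B (cadd x y),
      forall (a : Cx) x, B x -> B (cscal a x),
      forall x y, B x -> B y -> B (cmul x y)
    & forall x, B x -> B (cstar x)].

Definition image_of (A : CStarAlgebra) (rho : A -> A) : A -> Prop :=
  fun x => exists a : A, x = rho a.

Definition canonical_wrt (A : CStarAlgebra) (B : A -> Prop) (lam : A -> A) : Prop :=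
  [/\ unital_star_subalgebra B,
      is_endo lam,
      forall a : A, B (lam a)
    & exists T S : A,
      [/\ intertwiner id lam T,
          B S,
          forall b : A, B b -> cmul S b = cmul (lam b) S,
          exists c : Cx, c != 0 /\ cmul (cstar S) (lam T) = cscal c c1
        & exists c : Cx, c != 0 /\ cmul (cstar T) S = cscal c c1]].

(* Take T := Rb and S := rho R.  Applying rho to the intertwining relation of R
   shows that S intertwines rho with lambda o rho, i.e. S b = lambda(b) S on the
   image of rho, and the two conjugate equations say exactly that
   S* lambda(T) = rho (R* rhob(Rb)) = 1 and T* S = Rb* rho(R) = 1. *)
From mathcomp Require Import all_boot all_algebra.
From mathcomp Require Import complex Rstruct.
Import GRing.Theory.
Local Open Scope ring_scope.

Section Endomorphisms.
Context {A : CStarAlgebra}.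
Implicit Types (f g sigma tau : A -> A) (T : A).

Lemma is_endo_comp f g : is_endo f -> is_endo g -> is_endo (f \o g).
Proof.
move=> [fD fZ fM fS f1] [gD gZ gM gS g1]; split=> /=.
- by move=> x y; rewrite gD fD.
- by move=> c x; rewrite gZ fZ.
- by move=> x y; rewrite gM fM.
- by move=> x; rewrite gS fS.
- by rewrite g1 f1.
Qed.

Lemma image_of_endo_subalgebra f : is_endo f -> unital_star_subalgebra (image_of f).
Proof.
move=> [fD fZ fM fS f1]; split.
- by exists c1; rewrite f1.
- by move=> _ _ [a ->] [b ->]; exists (cadd a b); rewrite fD.
- by move=> c _ [a ->]; exists (cscal c a); rewrite fZ.
- by move=> _ _ [a ->] [b ->]; exists (cmul a b); rewrite fM.
- by move=> _ [a ->]; exists (cstar a); rewrite fS.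
Qed.

Lemma endo_intertwiner {f sigma tau T} :
  is_endo f -> intertwiner sigma tau T -> intertwiner (f \o sigma) (f \o tau) (f T).
Proof. by move=> [_ _ fM _ _] hT a; rewrite /= -!fM hT. Qed.

Lemma c1_nonzero_scalar : exists c : Cx, c != 0 /\ (@c1 A) = cscal c c1.
Proof. by exists 1; rewrite cscal1 oner_neq0. Qed.

End Endomorphisms.

Theorem propositionA3 (A : CStarAlgebra) (rho rhob : A -> A) :
  is_endo rho -> is_endo rhob -> trivial_centre A ->
  (exists R Rb : A,
      [/\ intertwiner id (fun a => rhob (rho a)) R,
          intertwiner id (fun a => rho (rhob a)) Rb,
          cmul (cstar R) (rhob Rb) = c1
        & cmul (cstar Rb) (rho R) = c1]) ->
  canonical_wrt (image_of rho) (fun a => rho (rhob a)).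
Proof.
move=> rho_endo rhob_endo _ [R [Rb [R_intw Rb_intw R_conj Rb_conj]]].
have [_ _ rhoM rhoS rho1] := rho_endo.
split.
- exact: image_of_endo_subalgebra.
- exact: is_endo_comp.
- by move=> a; exists (rhob a).
exists Rb, (rho R); split.
- exact: Rb_intw.
- by exists R.
- move=> _ [a ->]; exact: (endo_intertwiner rho_endo R_intw) a.
- by rewrite -rhoS -rhoM R_conj rho1; apply: c1_nonzero_scalar.
- by rewrite Rb_conj; apply: c1_nonzero_scalar.
Qed.
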